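(* Let $G=(V,E)$ be an undirected graph with $n$ vertices, and let $\pi$ be a uniformly random ordering of $V$. Let $\ell>0$ and $d\le n$ be positive, and let $P$ be the $(\ell/d)$-prefix of $V$ with respect to $\pi$. Let $W$ be the lexicographically first maximal independent set of the induced subgraph $G[P]$ with respect to $\pi$. If $W$ and all of its neighbors $N_G(W)$ are removed from $G$, then with probability at least $1-n/e^{\ell}$ every remaining vertex has degree at most $d$ in the remaining graph $G[V\setminus (W\cup N_G(W))]$.
   Context: For a vertex set $U$, $N_G(U)$ is the set of all neighbors of vertices in $U$, and $G[U]$ is the subgraph induced by $U$. For an ordered vertex set $V$ and $0<\delta\le 1$, the $\delta$-prefix $P(V,\pi,\delta)$ is the set of the $\delta|V|$ earliest vertices of $V$ in the ordering $\pi$. The lexicographically first maximal independent set of a graph with respect to an ordering $\pi$ is the output of the sequential greedy algorithm: repeatedly take the first remaining vertex $v$ in the order $\pi$, add it to the set, and delete $v$ and all its neighbors, until no vertices remain. *)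

From HB Require Import structures.
From mathcomp Require Import all_boot all_order all_fingroup all_algebra.
From mathcomp Require Import reals sequences exp.
Set Implicit Arguments. Unset Strict Implicit. Unset Printing Implicit Defensive.
Import Order.TTheory GRing.Theory Num.Theory.

(* Simple undirected graph on a finite vertex type T: e is a symmetric,
   irreflexive relation.  A vertex ordering is a permutation sigma of T;
   the position of v is the rank of sigma v in the enumeration of T. *)

Section Defs.
Variable T : finType.

Definition pos (s : {perm T}) (v : T) : nat := enum_rank (s v).

Definition nbhd (e : rel T) (U : {set T}) : {set T} :=
  [set u | [exists w in U, e w u]].

Fixpoint greedy_mis (e : rel T) (s : {perm T}) (fuel : nat) (Rm : {set T})
  : {set T} :=
  match fuel with
  | 0 => set0
  | f.+1 =>
    match [pick v in Rm | [forall u in Rm, pos s v <= pos s u]] with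
    | Some v => v |: greedy_mis e s f (Rm :\: (v |: nbhd e [set v]))
    | None => set0
    end
  end.

Definition lfmis (e : rel T) (s : {perm T}) (U : {set T}) : {set T} :=
  greedy_mis e s #|T| U.

(* delta-prefix: the vertices whose position i (0-based) satisfies
   i < delta * |V|, i.e. the first ceil(delta |V|) vertices (all of V if
   delta >= 1). *)
Definition vprefix (R : realType) (s : {perm T}) (delta : R) : {set T} :=
  [set v | ((pos s v)%:R < delta * #|T|%:R)%R].

End Defs.

From HB Require Import structures.
From mathcomp Require Import all_boot all_order all_fingroup all_algebra.
From mathcomp Require Import reals sequences exp.
Import Order.TTheory GRing.Theory Num.Theory.
Set Implicit Arguments. Unset Strict Implicit. Unset Printing Implicit Defensive.

(* Fix a vertex v and reveal the ordering one position at a time.  Call a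
   neighbour x of v live at time t if x sits at position >= t and no vertex of
   W revealed before t is adjacent to x.  Every vertex revealed before time
   k = |P| lies in the prefix P, so a revealed live neighbour joins W and
   deletes v.  Hence if v survives with more than d remaining neighbours (which
   all stay live), then at every time t < k the vertex at position t was not
   live although at least m = floor d + 1 neighbours were.  Given the first t
   positions, the next vertex is uniform among the n - t others, so this has
   probability at most prod_(t < k) (1 - m / (n - t)) <= (1 - d/n)^k <= e^-l;
   a union bound over v concludes. *)

Section Positions.
Variable T : finType.
Implicit Types (s : {perm T}) (x y z : T) (i : 'I_#|T|).

Lemma pos_inj s : injective (pos s).
Proof. by move=> x y /val_inj /enum_rank_inj /perm_inj. Qed.

Definition at_pos s (i : 'I_#|T|) : T := (s^-1)%g (enum_val i).

Lemma pos_at_pos s i : pos s (at_pos s i) = i.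
Proof. by rewrite /pos /at_pos permKV enum_valK. Qed.

Lemma card_pos_geq s t : #|[set x | t <= pos s x]| = #|T| - t.
Proof.
pose rank x := enum_rank (s x).
have rank_bij : bijective rank.
  exists (at_pos s) => [x|i]; first by apply: (@pos_inj s); rewrite pos_at_pos.
  by apply: val_inj; rewrite /= -/(pos s _) pos_at_pos.
have -> : [set x | t <= pos s x] = rank @^-1: [set i : 'I_#|T| | t <= i].
  by apply/setP => x; rewrite !inE.
rewrite on_card_preimset; last exact: onW_bij.
rewrite -sum1dep_card -(big_geq_mkord t #|T| xpredT (fun _ => 1)).
by rewrite sum_nat_const_nat muln1.
Qed.

Lemma card_perms : #|{perm T}| = #|T|`!.
Proof.
rewrite -cardsT -card_perm; apply: eq_card => s.
by rewrite !inE; apply/esym/subsetP => x; rewrite inE.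
Qed.

Definition agree_below t s s' := forall x, pos s x < t -> pos s' x = pos s x.

Lemma agree_below_sym t s s' : agree_below t s s' -> agree_below t s' s.
Proof.
move=> ag x hx; pose z := at_pos s (enum_rank (s' x)).
have pz : pos s z = pos s' x by rewrite pos_at_pos.
have /(@pos_inj s') zx : pos s' z = pos s' x by rewrite ag pz.
by rewrite -pz zx.
Qed.

Lemma agree_below_le t t' s s' :
  t' <= t -> agree_below t s s' -> agree_below t' s s'.
Proof. by move=> le_t ag x hx; apply: ag; apply: leq_trans le_t. Qed.

Lemma agree_below_ltE t s s' x :
  agree_below t s s' -> (pos s x < t) = (pos s' x < t).
Proof.
move=> ag; apply/idP/idP => hx; first by rewrite ag.
by rewrite (agree_below_sym ag).
Qed.

Definition move_to s i z := (tperm z (at_pos s i) * s)%g.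

Lemma pos_move_to s i z x : pos (move_to s i z) x = pos s (tperm z (at_pos s i) x).
Proof. by rewrite /pos permM. Qed.

Lemma at_pos_move_to s i z : at_pos (move_to s i z) i = z.
Proof.
apply: (@pos_inj (move_to s i z)).
by rewrite pos_at_pos pos_move_to tpermL pos_at_pos.
Qed.

Lemma move_toK s i z : move_to (move_to s i z) i (at_pos s i) = s.
Proof. by rewrite {1}/move_to at_pos_move_to tpermC /move_to mulgA tperm2 mul1g. Qed.

Lemma agree_below_move_to s i z : i <= pos s z -> agree_below i (move_to s i z) s.
Proof.
move=> hz x; rewrite pos_move_to; case: tpermP => [->|->|//].
  by rewrite pos_at_pos ltnn.
by rewrite ltnNge hz.
Qed.

End Positions.

Lemma in_nbhd1 (T : finType) (e : rel T) v u : (u \in nbhd e [set v]) = e v u.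
Proof.
rewrite inE; apply/exists_inP/idP => [[w /set1P -> //]|evu].
by exists v; rewrite ?set11.
Qed.

Section Greedy.
Variables (T : finType) (e : rel T) (s : {perm T}).
Hypothesis e_irr : irreflexive e.

Lemma mem_greedy_mis f (U : {set T}) x : #|U| <= f ->
  (x \in greedy_mis e s f U) =
  (x \in U) && [forall y, (y \in greedy_mis e s f U) ==> ~~ (e y x && (pos s y < pos s x))].
Proof.
elim: f U x => [|f IH] U x /=.
  by rewrite leqn0 => /eqP/cards0_eq ->; rewrite !inE.
move=> le_Uf; case: pickP => [v /andP[vU /forall_inP vmin] | nofirst]; last first.
  case: (set_0Vmem U) => [-> | [y yU]]; first by rewrite !inE.
  case: (arg_minnP (pos s) yU) => z zU zmin.
  by move: (nofirst z); rewrite (zU : z \in U) => /negbT/forall_inPn[u /zmin ->].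
set U' := U :\: (v |: nbhd e [set v]).
have le_U'f : #|U'| <= f.
  rewrite -ltnS (leq_trans _ le_Uf) // proper_card //; apply/properP.
  split; first by apply/subsetP => u; rewrite inE => /andP[].
  by exists v => //; rewrite !inE eqxx.
have sub_U y : y \in greedy_mis e s f U' -> y \in U.
  by rewrite IH // => /andP[]; rewrite inE => /andP[].
rewrite in_setU1; have [->|xv] := eqVneq x v.
  rewrite vU /=; symmetry; apply/forallP => y; apply/implyP; rewrite in_setU1.
  case/orP => [/eqP ->|/sub_U /vmin le_vy]; first by rewrite e_irr.
  by rewrite ltnNge le_vy andbF.
rewrite /= IH // /U' in_setD in_setU1 in_nbhd1 (negbTE xv) /=.
case evx: (e v x) => /=.
  case xU: (x \in U) => //=; apply/esym/negbTE/forallPn; exists v.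
  rewrite in_setU1 eqxx /= evx /= negbK ltn_neqAle vmin // andbT.
  by apply: contra_neq xv => /pos_inj.
congr (_ && _); apply: eq_forallb => y; rewrite in_setU1.
by case: eqVneq => [->|_] /=; rewrite ?evx ?implybT.
Qed.

Lemma mem_lfmis (U : {set T}) x : (x \in lfmis e s U) =
  (x \in U) && [forall y, (y \in lfmis e s U) ==> ~~ (e y x && (pos s y < pos s x))].
Proof. by apply: mem_greedy_mis; apply: max_card. Qed.

End Greedy.

Lemma card_setX_dep (S U : finType) (A : {set S}) (B : S -> {set U}) :
  #|[set p : S * U | (p.1 \in A) && (p.2 \in B p.1)]| = \sum_(s in A) #|B s|.
Proof.
rewrite -sum1dep_card -(pair_big_dep (mem A) (fun s => mem (B s)) (fun _ _ => 1)).
by apply: eq_bigr => s _; rewrite sum1dep_card cardsE.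
Qed.

Lemma card_bigcup_le (I S : finType) (F : I -> {set S}) :
  #|\bigcup_i F i| <= \sum_i #|F i|.
Proof.
elim/big_rec2: _ => [|i n A _ le_An]; first by rewrite cards0.
by rewrite (leq_trans (leq_card_setU _ _)) ?leq_add2l.
Qed.

Local Open Scope ring_scope.

Definition miss_ratio (R : realFieldType) (n m i : nat) : R :=
  (n - i - m)%N%:R / (n - i)%N%:R.

Lemma miss_ratio_bounds (R : realFieldType) (n m i : nat) (d : R) :
  0 < d -> d <= n%:R -> d <= m%:R -> (i < n)%N ->
  0 <= miss_ratio R n m i <= 1 - d / n%:R.
Proof.
move=> d_gt0 d_le_n d_le_m lt_in.
have n_gt0 : 0 < n%:R :> R by apply: lt_le_trans d_le_n.
have ni_gt0 : 0 < (n - i)%N%:R :> R by rewrite ltr0n subn_gt0.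
rewrite /miss_ratio divr_ge0 //=.
case: (leqP m (n - i)) => le_m_ni; last first.
  move: (ltnW le_m_ni); rewrite -subn_eq0 => /eqP ->.
  by rewrite mul0r subr_ge0 ler_pdivrMr ?mul1r.
rewrite natrB // mulrBl divff ?gt_eqF // lerD2l lerN2.
apply: (@le_trans _ _ (m%:R / n%:R)); first by rewrite ler_pM2r ?invr_gt0.
rewrite ler_pdivrMr // mulrAC ler_pdivlMr // ler_pM2l ?ler_nat ?leq_subr //.
exact: lt_le_trans d_le_m.
Qed.

Lemma prod_miss_ratio_le (R : realType) (n m k : nat) (l d : R) :
  0 < d -> d <= n%:R -> d <= m%:R -> (0 < m)%N -> (k <= n)%N ->
  (n <= k)%N || (l / d * n%:R <= k%:R) ->
  \prod_(i < k) miss_ratio R n m i <= expR (- l).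
Proof.
move=> d_gt0 d_le_n d_le_m m_gt0 le_kn /orP[le_nk|k_big].
  (* then k = n, and the last factor (1 - m) / 1 vanishes *)
  have -> : k = n by apply/eqP; rewrite eqn_leq le_kn le_nk.
  case: n {le_kn le_nk} d_le_n => [|n] d_le_n.
    by have := lt_le_trans d_gt0 d_le_n; rewrite ltxx.
  rewrite big_ord_recr /= /miss_ratio subSn // subnn.
  by rewrite (_ : (1 - m)%N = 0%N) ?mul0r ?mulr0 ?expR_ge0 //; apply/eqP; rewrite subn_eq0.
have n_gt0 : 0 < n%:R :> R by apply: lt_le_trans d_le_n.
apply: (@le_trans _ _ (\prod_(i < k) (1 - d / n%:R))).
  apply: ler_prod => i _; apply: miss_ratio_bounds => //.
  exact: leq_trans (ltn_ord i) le_kn.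
rewrite prodr_const card_ord.
apply: (@le_trans _ _ (expR (- (d / n%:R)) ^+ k)).
  apply: lerXn2r; rewrite ?nnegrE ?expR_ge0 ?expR_ge1Dx //.
  by rewrite subr_ge0 ler_pdivrMr // mul1r.
rewrite -expRM_natl ler_expR mulrN lerN2 mulrA ler_pdivlMr //.
by move: k_big; rewrite mulrAC ler_pdivrMr.
Qed.

(* k = min(n, ceil (L n)) is the size of the L-prefix of an n-vertex graph. *)
Lemma exists_prefix_length (R : realFieldType) (L : R) (n : nat) :
  exists k, [/\ (k <= n)%N, (n <= k)%N || (L * n%:R <= k%:R)
              & forall j, (j < k)%N -> j%:R < L * n%:R].
Proof.
have exP : exists j, (n <= j)%N || (L * n%:R <= j%:R) by exists n; rewrite leqnn.
case: (ex_minnP exP) => k Pk kmin; exists k; split => //.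
  by apply: kmin; rewrite leqnn.
move=> j lt_jk; have /negP : ~ ((n <= j)%N || (L * n%:R <= j%:R)).
  by move=> /kmin; rewrite leqNgt lt_jk.
by rewrite negb_or -ltNge => /andP[].
Qed.

Local Close Scope ring_scope.

Section Exposure.
Variables (R : realType) (T : finType) (e : rel T) (L : R).
Hypotheses (e_sym : symmetric e) (e_irr : irreflexive e).
Implicit Types (s : {perm T}) (u v x y : T).

Definition prefix_mis s := lfmis e s (vprefix s L).

Definition remaining s := ~: (prefix_mis s :|: nbhd e (prefix_mis s)).

Lemma prefix_mis_agree t s s' x : agree_below t s s' -> pos s x < t ->
  (x \in prefix_mis s) = (x \in prefix_mis s').
Proof.
move=> ag lt_xt; have [j] := ubnP (pos s x); elim: j x lt_xt => [//|j IH] x lt_xt lt_xj.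
rewrite mem_lfmis // [RHS]mem_lfmis // !inE (ag x lt_xt); congr (_ && _).
apply: eq_forallb => y; case: (ltnP (pos s y) (pos s x)) => [lt_yx|le_xy].
  have lt_yt := ltn_trans lt_yx lt_xt.
  by rewrite (ag y lt_yt) lt_yx (IH y lt_yt (leq_trans lt_yx lt_xj)).
rewrite andbF implybT.
case: (ltnP (pos s' y) (pos s x)) => [lt_y'x|_]; last by rewrite andbF implybT.
have lt_y't := ltn_trans lt_y'x lt_xt.
by move: le_xy; rewrite (agree_below_sym ag lt_y't) leqNgt lt_y'x.
Qed.

Definition live_nbrs v t s := [set x | [&& e v x, t <= pos s x &
  ~~ [exists y, [&& y \in prefix_mis s, pos s y < t & e y x]]]].

Definition keeps_live v m t s := [forall x, (pos s x < t) ==>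
  (m <= #|live_nbrs v (pos s x) s|) && (x \notin live_nbrs v (pos s x) s)].

Lemma live_nbrs_agree v t s s' :
  agree_below t s s' -> live_nbrs v t s = live_nbrs v t s'.
Proof.
move=> ag; apply/setP => x; rewrite !inE !(leqNgt t) (agree_below_ltE x ag).
congr [&& _, _ & ~~ _]; apply: eq_existsb => y.
case lt_yt: (pos s y < t); first by rewrite (ag y lt_yt) lt_yt (prefix_mis_agree ag lt_yt).
by rewrite -(agree_below_ltE y ag) lt_yt !andbF.
Qed.

Lemma keeps_live_agree v m t s s' :
  agree_below t s s' -> keeps_live v m t s = keeps_live v m t s'.
Proof.
move=> ag; apply: eq_forallb => x; rewrite -(agree_below_ltE x ag).
case lt_xt: (pos s x < t) => //=.
by rewrite (ag x lt_xt) (live_nbrs_agree v (agree_below_le (ltnW lt_xt) ag)).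
Qed.

Lemma keeps_liveW v m t s : keeps_live v m t.+1 s -> keeps_live v m t s.
Proof.
by move=> /forallP keep; apply/forallP => x; apply/implyP => /ltnW; apply/implyP/keep.
Qed.

Lemma keeps_live_move_to v m (i : 'I_#|T|) s z :
  i <= pos s z -> keeps_live v m i.+1 s ->
  let s' := move_to s i z in
  [/\ keeps_live v m i s', m <= #|live_nbrs v i s'|,
      at_pos s i \notin live_nbrs v i s' & i <= pos s' (at_pos s i)].
Proof.
move=> le_iz keep s'; have ag : agree_below i s' s := agree_below_move_to le_iz.
have /andP[heavy not_live] :
    (m <= #|live_nbrs v i s|) && (at_pos s i \notin live_nbrs v i s).
  by have /implyP := forallP keep (at_pos s i); rewrite pos_at_pos; apply.
rewrite (keeps_live_agree v m ag) (keeps_liveW keep) (live_nbrs_agree v ag).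
by rewrite heavy not_live pos_move_to tpermR.
Qed.

(* Given the first t positions, the vertex at position t is uniform among the
   n - t others, and keeping [v] alive forbids at least m of them.  Formally,
   (s, z) |-> (s with z moved to position t, vertex of s at position t)
   injects the pairs counted on the left into those counted on the right. *)
Lemma card_keeps_liveS v m t : t < #|T| ->
  #|[set s | keeps_live v m t.+1 s]| * (#|T| - t) <=
  #|[set s | keeps_live v m t s]| * (#|T| - t - m).
Proof.
move=> lt_tn; pose i : 'I_#|T| := Ordinal lt_tn.
set A := [set s | keeps_live v m t.+1 s].
pose B := [set s | keeps_live v m t s & m <= #|live_nbrs v t s|].
pose later s := [set y | t <= pos s y].
pose later_dead s := later s :\: live_nbrs v t s.
pose pairsA := [set p : {perm T} * T | (p.1 \in A) && (p.2 \in later p.1)].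
pose pairsB := [set p : {perm T} * T | (p.1 \in B) && (p.2 \in later_dead p.1)].
pose swap p := (move_to p.1 i p.2, at_pos p.1 i).
have swap_inj : injective swap.
  by apply: (can_inj (g := swap)) => -[s y]; rewrite /swap /= at_pos_move_to move_toK.
have swap_sub : swap @: pairsA \subset pairsB.
  apply/subsetP => p /imsetP[[s z] pA ->]; rewrite !inE /= in pA.
  case/andP: pA => keep le_tz.
  have [keep' heavy not_live le_t] := @keeps_live_move_to v m i s z le_tz keep.
  by rewrite inE /= in_setD (negbTE not_live) !inE keep' heavy le_t.
have cardA : #|pairsA| = #|A| * (#|T| - t).
  rewrite (card_setX_dep A later) (eq_bigr _ (fun s _ => card_pos_geq s t)).
  exact: sum_nat_const.
have cardB : #|pairsB| <= #|[set s | keeps_live v m t s]| * (#|T| - t - m).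
  rewrite (card_setX_dep B later_dead).
  apply: (@leq_trans (\sum_(s in B) (#|T| - t - m))).
    apply: leq_sum => s; rewrite inE => /andP[_ heavy].
    rewrite cardsDS ?card_pos_geq ?leq_sub2l //.
    by apply/subsetP => y; rewrite !inE => /and3P[].
  rewrite sum_nat_const leq_mul // subset_leq_card //.
  by apply/subsetP => s; rewrite !inE => /andP[].
rewrite -cardA (leq_trans _ cardB) // -(card_imset _ swap_inj).
exact: subset_leq_card.
Qed.

Lemma card_keeps_live_le v m t : t <= #|T| ->
  (#|[set s | keeps_live v m t s]|%:R <=
   #|T|`!%:R * \prod_(i < t) miss_ratio R #|T| m i)%R.
Proof.
elim: t => [_|t IH lt_tn].
  by rewrite big_ord0 mulr1 -card_perms ler_nat max_card.
have ratio_ge0 : (0 <= miss_ratio R #|T| m t)%R by rewrite divr_ge0.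
rewrite big_ord_recr /= mulrA.
apply: le_trans (ler_wpM2r ratio_ge0 (IH (ltnW lt_tn))).
rewrite /miss_ratio mulrA ler_pdivlMr ?ltr0n ?subn_gt0 //.
by rewrite -!natrM ler_nat card_keeps_liveS.
Qed.

Lemma early_dominated s k u : (forall x, pos s x < k -> x \in vprefix s L) ->
  pos s u < k -> u \notin prefix_mis s ->
  exists2 y, y \in prefix_mis s & e y u && (pos s y < pos s u).
Proof.
move=> pre lt_uk; rewrite [u \in _]mem_lfmis // pre //= => /forallPn[y].
by rewrite negb_imply negbK => /andP[yW eyu]; exists y.
Qed.

Lemma remaining_nbrs_live s k v t : (forall x, pos s x < k -> x \in vprefix s L) ->
  t <= k -> [set u in remaining s | e v u] \subset live_nbrs v t s.
Proof.
move=> pre le_tk; apply/subsetP => u.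
rewrite !inE negb_or => /andP[/andP[uW undom] evu].
rewrite evu /=; apply/andP; split.
  rewrite leqNgt; apply/negP => lt_ut.
  have [y yW /andP[eyu _]] := early_dominated pre (leq_trans lt_ut le_tk) uW.
  by move/exists_inP: undom; apply; exists y.
apply/negP => /existsP[y /and3P[yW _ eyu]].
by move/exists_inP: undom; apply; exists y.
Qed.

Lemma heavy_keeps_live s k v m : (forall x, pos s x < k -> x \in vprefix s L) ->
  v \in remaining s -> m <= #|[set u in remaining s | e v u]| -> keeps_live v m k s.
Proof.
move=> pre vR heavy; apply/forallP => x; apply/implyP => lt_xk.
rewrite (leq_trans heavy) ?subset_leq_card ?(remaining_nbrs_live v pre (ltnW lt_xk)) //=.
rewrite !inE leqnn /= negb_and negbK orbC; case: (boolP (x \in prefix_mis s)) => [xW|xW].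
  move: vR; rewrite !inE negb_or => /andP[_ /exists_inP nodom].
  by apply/orP; right; apply/negP => evx; apply: nodom; exists x; rewrite // e_sym.
have [y yW /andP[eyx lt_yx]] := early_dominated pre lt_xk xW.
by apply/orP; left; apply/existsP; exists y; rewrite yW lt_yx eyx.
Qed.

End Exposure.

Local Open Scope ring_scope.

Definition remaining_degree_le (R : realType) (T : finType) (e : rel T) (L d : R)
    (s : {perm T}) :=
  [forall v in remaining e L s, #|[set u in remaining e L s | e v u]|%:R <= d].

Lemma card_remaining_degree_gt (R : realType) (T : finType) (e : rel T)
    (e_sym : symmetric e) (e_irr : irreflexive e) (l d : R) :
  0 < d -> d <= #|T|%:R ->
  #|~: [set s | remaining_degree_le e (l / d) d s]|%:R <= #|T|%:R / expR l * #|T|`!%:R.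
Proof.
move=> d_gt0 d_le_n; set L := l / d; pose m := (Num.truncn d).+1.
have [k [le_kn k_big k_pre]] := exists_prefix_length L #|T|.
have pre (s : {perm T}) x : (pos s x < k)%N -> x \in vprefix s L.
  by rewrite inE; apply: k_pre.
have bad_sub : ~: [set s | remaining_degree_le e L d s] \subset
               \bigcup_(v : T) [set s | keeps_live e L v m k s].
  apply/subsetP => s; rewrite !inE => /forall_inPn[v vR heavy]; apply/bigcupP.
  exists v; rewrite // inE (heavy_keeps_live e_sym e_irr (pre s) vR) //.
  by rewrite /m truncn_lt_nat ?ltW // ltNge.
have card_keeps v :
    #|[set s | keeps_live e L v m k s]|%:R <= #|T|`!%:R * expR (- l) :> R.
  apply: le_trans (card_keeps_live_le L e_irr v m le_kn) _.
  by rewrite ler_wpM2l // (prod_miss_ratio_le (d := d)) // ltW // truncnS_gt.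
apply: le_trans (_ : (\sum_(v : T) #|[set s | keeps_live e L v m k s]|)%N%:R <= _).
  by rewrite ler_nat (leq_trans (subset_leq_card bad_sub)) ?card_bigcup_le.
rewrite natr_sum (le_trans (ler_sum _ (fun v _ => card_keeps v))) //.
by rewrite sumr_const -[X in _ *+ X]/#|T| -[_ *+ #|T|]mulr_natl expRN mulrA mulrAC.
Qed.

Theorem lemma1 (R : realType) (T : finType) (e : rel T)
  (e_sym : symmetric e) (e_irr : irreflexive e) (l d : R)
  (hl : 0 < l) (hd : 0 < d) (hdn : d <= #|T|%:R) :
  let good (s : {perm T}) :=
    let W := lfmis e s (vprefix s (l / d)) in
    let Rest := ~: (W :|: nbhd e W) in
    [forall v in Rest, (#|[set u in Rest | e v u]|%:R <= d)] in
  1 - #|T|%:R / expR l <= #|[set s : {perm T} | good s]|%:R / (#|T|`!)%:R.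
Proof.
change (1 - #|T|%:R / expR l <=
        #|[set s | remaining_degree_le e (l / d) d s]|%:R / #|T|`!%:R).
set good := [set s | _].
have card_good : #|good| = (#|T|`! - #|~: good|)%N.
  by rewrite -card_perms -(cardsC good) addnK.
rewrite ler_pdivlMr ?ltr0n ?fact_gt0 // mulrBl mul1r card_good natrB.
  by rewrite lerD2l lerN2 card_remaining_degree_gt.
by rewrite -card_perms max_card.
Qed.
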